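(* Let $p,k,q,n$ be positive integers. If there exist an S-template with width $q$ and $n+1$ colors and an S-template with width $p$ and $k$ colors, then there exists an S-template with width $pq$ and $n+k$ colors.
   Context: A set $A \subseteq \mathbb{N}$ is sum-free if for all $(a,b)\in A^2$ (allowing $a=b$), $a+b \notin A$. For positive integers $p,n$, an S-template with $n$ colors and width $p$ is a partition of $\{1,\dots,p\}$ into $n$ sum-free subsets $A_1,\dots,A_n$ such that for every $i \in \{1,\dots,n-1\}$ (i.e. every subset except $A_n$) and all $(x,y)\in A_i^2$: if $x+y>p$ then $x+y-p \notin A_i$. *)

From mathcomp Require Import all_boot.

(* An S-template with n colors and width p, encoded as a coloring
   c : nat -> nat of {1,...,p}; color i (0 <= i < n) corresponds to the
   subset A_(i+1) = {x in [1,p] | c x = i}.  Color n-1 is A_n, the subset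
   exempt from the modular condition.  Values of c outside [1,p] are
   irrelevant. *)
Definition S_template (n p : nat) (c : nat -> nat) : Prop :=
  (forall x, 1 <= x <= p -> c x < n) /\
  (* each A_i is sum-free (a = b allowed) *)
  (forall x y, 1 <= x -> 1 <= y -> x + y <= p -> c x = c y -> c (x + y) <> c x) /\
  (* for every A_i with i < n (0-indexed: c x < n.-1): x + y > p -> x + y - p notin A_i *)
  (forall x y, 1 <= x <= p -> 1 <= y <= p -> p < x + y -> c x = c y ->
     c x < n.-1 -> c (x + y - p) <> c x).

Definition has_S_template (n p : nat) : Prop := exists c, S_template n p c.

From mathcomp Require Import all_boot.
From mathcomp Require Import zify.

(* Write a point of [1, pq] as x = m q + t with t in [1, q] and m in [0, p).
   Color x by c1 t when this is not the last color n of the width-q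
   template, and by n + c2 (m + 1) otherwise.  If x, y, z have the same color
   and z = x + y, possibly reduced mod pq, then the positions satisfy
   t_z = t_x + t_y, possibly reduced mod q.  Without reduction mod q the
   first template is sum-free on every color, including n; with reduction its
   modular condition covers the colors below n, while at color n the carry
   makes the block indices m + 1 add up exactly, so the second template
   applies to them. *)

(* Both conditions of an S-template at once: [e] tells whether the sum wraps
   around, i.e. whether [z = x + y - p] rather than [z = x + y]. *)
Definition wrap_sum_free (N p : nat) (c : nat -> nat) : Prop :=
  forall (e : bool) x y z, 1 <= x <= p -> 1 <= y <= p -> 1 <= z <= p ->
  z + e * p = x + y -> c x = c y -> (e -> c x < N.-1) -> c z <> c x.

Lemma S_template_wrap_sum_free {N p c} : S_template N p c -> wrap_sum_free N p c.
Proof.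
move=> [_ [sum_free wrap_free]] [] x y z x_p y_p z_p /= sum_xy cxy.
- have -> : z = x + y - p by lia.
  by move=> /(_ isT) cx_lt; apply: wrap_free => //; lia.
- have -> : z = x + y by lia.
  by move=> _; apply: sum_free => //; lia.
Qed.

Lemma wrap_sum_free_S_template N p c :
  (forall x, 1 <= x <= p -> c x < N) -> wrap_sum_free N p c -> S_template N p c.
Proof.
move=> c_lt c_free; split=> //; split.
- by move=> x y x1 y1 xy_p cxy; apply: (c_free false x y) => //; lia.
- by move=> x y x_p y_p p_xy cxy cx_lt; apply: (c_free true x y) => //; lia.
Qed.

Lemma block_decomposition p q x : 1 <= x <= p * q ->
  exists m t, [/\ x = m * q + t, 1 <= t <= q & m < p].
Proof.
move=> x_pq; have q_gt0 : 0 < q by case: q x_pq => [|//]; lia.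
exists (x.-1 %/ q), (x.-1 %% q).+1.
have := divn_eq x.-1 q; have := ltn_pmod x.-1 q_gt0; split; nia.
Qed.

Lemma block_decomposition_uniq {q m t m' t'} :
  1 <= t <= q -> 1 <= t' <= q -> m * q + t = m' * q + t' -> m = m' /\ t = t'.
Proof.
move=> t_q t'_q eq_mt; have m_eq : m = m' by nia.
by split; lia.
Qed.

Definition block_color n (c1 c2 : nat -> nat) m t :=
  if c1 t < n then c1 t else n + c2 m.+1.

Definition product_color n q (c1 c2 : nat -> nat) x :=
  block_color n c1 c2 (x.-1 %/ q) (x.-1 %% q).+1.

Lemma product_colorE n q c1 c2 m t : 1 <= t <= q ->
  product_color n q c1 c2 (m * q + t) = block_color n c1 c2 m t.
Proof.
move=> t_q; have q_gt0 : 0 < q by lia.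
have t'_q : t.-1 < q by lia.
rewrite /product_color; have -> : (m * q + t).-1 = m * q + t.-1 by lia.
by rewrite divnMDl // modnMDl divn_small // modn_small // addn0 prednK //; lia.
Qed.

Lemma block_color_eq {n c1 c2 m t m' t'} : c1 t <= n -> c1 t' <= n ->
  block_color n c1 c2 m t = block_color n c1 c2 m' t' ->
  c1 t = c1 t' /\ (c1 t = n -> c2 m.+1 = c2 m'.+1).
Proof. by rewrite /block_color; do 2 case: ifP; lia. Qed.

Section ProductTemplate.

Context {n k p q : nat} {c1 c2 : nat -> nat}.
Hypotheses (T1 : S_template n.+1 q c1) (T2 : S_template k p c2).

Local Notation color := (product_color n q c1 c2).

Let c1_le {t} : 1 <= t <= q -> c1 t <= n.
Proof. by case: T1 => c1_lt _ /c1_lt. Qed.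

Lemma product_color_lt x : 1 <= x <= p * q -> color x < n + k.
Proof.
move=> /block_decomposition [m [t [-> t_q m_p]]].
rewrite product_colorE // /block_color.
have := c1_le t_q; have : c2 m.+1 < k by case: T2 => c2_lt _; apply: c2_lt; lia.
by case: ifP; lia.
Qed.

Lemma product_color_wrap_sum_free : wrap_sum_free (n + k) (p * q) color.
Proof.
move=> e x y z /block_decomposition [mx [tx [-> tx_q mx_p]]].
move=> /block_decomposition [my [ty [-> ty_q my_p]]].
move=> /block_decomposition [mz [tz [-> tz_q mz_p]]] sum_xy.
rewrite !product_colorE // => cxy cx_lt czx.
have [c1xy c2xy] := block_color_eq (c1_le tx_q) (c1_le ty_q) cxy.
have [c1zx c2zx] := block_color_eq (c1_le tz_q) (c1_le tx_q) czx.
have T1free := S_template_wrap_sum_free T1.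
have [no_carry | carry] := leqP (tx + ty) q.
- have [_ tz_sum] : mz + e * p = mx + my /\ tz = tx + ty.
    by apply: (block_decomposition_uniq tz_q); lia.
  by apply: (T1free false tx ty tz) => //; lia.
- have [mz_sum tz_sum] : mz + e * p = (mx + my).+1 /\ tz = tx + ty - q.
    by apply: (block_decomposition_uniq tz_q); lia.
  have [c1x_lt | c1x_n] := ltnP (c1 tx) n.
    by apply: (T1free true tx ty tz) => //; lia.
  have c1x_eq : c1 tx = n by have := c1_le tx_q; lia.
  apply: (S_template_wrap_sum_free T2 e mx.+1 my.+1 mz.+1); try lia.
  by move=> /cx_lt; rewrite /block_color c1x_eq ltnn; lia.
Qed.

End ProductTemplate.

Theorem theorem2p6 (p k q n : nat) :
  0 < p -> 0 < k -> 0 < q -> 0 < n ->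
  has_S_template n.+1 q -> has_S_template k p ->
  has_S_template (n + k) (p * q).
Proof.
move=> _ _ _ _ [c1 T1] [c2 T2]; exists (product_color n q c1 c2).
apply: wrap_sum_free_S_template.
- exact: product_color_lt T1 T2.
- exact: product_color_wrap_sum_free T1 T2.
Qed.
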